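(* Let $(S,\mathcal{S})$ be a measurable space with $\Delta\in\mathcal{S}\otimes\mathcal{S}$. Then every constructive map $\tau:\Omega\to C(S)$ is the union of countably many pairwise disjoint finite cr-sets (i.e. there are finite cr-sets $\rho_n$ with $\rho_n(\omega)\cap\rho_m(\omega)=\emptyset$ for $n\neq m$ and $\tau(\omega)=\bigcup_n\rho_n(\omega)$ for all $\omega$). In particular, $\tau$ is $\mathcal{F}$-$\mathcal{C}(\mathcal{S})$ measurable, i.e. a cr-set.
   Context: $\Delta=\{(x,x)\mid x\in S\}$. $(\Omega,\mathcal{F},P)$ is a probability space; $C(S)$ is the set of countable subsets of $S$; $N_A(M)=|A\cap M|$; $\mathcal{C}(\mathcal{S})=\sigma(N_A\mid A\in\mathcal{S})$; a cr-set is an $\mathcal{F}$-$\mathcal{C}(\mathcal{S})$ measurable map $\Omega\to C(S)$, finite if its values are finite sets. A map $\tau:\Omega\to C(S)$ is constructive if $\tau(\omega)=\bigcup_k\pi_k(\omega)$ for all $\omega$ for some finite cr-sets $\pi_k$, $k\in\mathbb{N}$. *)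

From Stdlib Require Import List.

Definition sigma_algebra {T : Type} (F : (T -> Prop) -> Prop) : Prop :=
  F (fun _ => True) /\
  (forall A, F A -> F (fun x => ~ A x)) /\
  (forall A : nat -> T -> Prop, (forall n, F (A n)) -> F (fun x => exists n, A n x)).

Definition generated {T : Type} (G : (T -> Prop) -> Prop) (A : T -> Prop) : Prop :=
  forall F, sigma_algebra F -> (forall B, G B -> F B) -> F A.

Definition product_sigma {T U : Type} (S1 : (T -> Prop) -> Prop) (S2 : (U -> Prop) -> Prop)
  : (T * U -> Prop) -> Prop :=
  generated (fun R => exists A B, S1 A /\ S2 B /\
                        forall p, R p <-> (A (fst p) /\ B (snd p))).

Definition diagonal (S : Type) : S * S -> Prop := fun p => fst p = snd p.

Definition countable {T : Type} (M : T -> Prop) : Prop :=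
  exists f : T -> nat, forall x y, M x -> M y -> f x = f y -> x = y.

Definition finite_set {T : Type} (M : T -> Prop) : Prop :=
  exists l : list T, forall x, M x -> In x l.

Definition CS (S : Type) : Type := { M : S -> Prop | countable M }.

(* |P| = k, with k : option nat, None standing for infinity (countable infinity). *)
Definition card_is {T : Type} (P : T -> Prop) (k : option nat) : Prop :=
  match k with
  | Some n => exists l : list T, NoDup l /\ length l = n /\ forall x, P x <-> In x l
  | None => ~ finite_set P
  end.

(* N_A(M) = |A cap M| *)
(* C(S-cal) = sigma(N_A | A in S-cal): generated by the preimages
   N_A^{-1}({k}), k in N u {infinity} (the discrete sigma-algebra on N u {oo}). *)
Definition crsigma {S : Type} (SS : (S -> Prop) -> Prop) : (CS S -> Prop) -> Prop :=
  generated (fun E => exists (A : S -> Prop) (k : option nat), SS A /\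
               forall M : CS S, E M <-> card_is (fun x => A x /\ proj1_sig M x) k).

Definition crset {Omega S : Type} (FF : (Omega -> Prop) -> Prop) (SS : (S -> Prop) -> Prop)
  (tau : Omega -> CS S) : Prop :=
  forall E, crsigma SS E -> FF (fun w => E (tau w)).

Definition finite_crset {Omega S : Type} (FF : (Omega -> Prop) -> Prop) (SS : (S -> Prop) -> Prop)
  (tau : Omega -> CS S) : Prop :=
  crset FF SS tau /\ forall w, finite_set (proj1_sig (tau w)).

Definition constructive {Omega S : Type} (FF : (Omega -> Prop) -> Prop) (SS : (S -> Prop) -> Prop)
  (tau : Omega -> CS S) : Prop :=
  exists pi : nat -> Omega -> CS S,
    (forall k, finite_crset FF SS (pi k)) /\
    forall w x, proj1_sig (tau w) x <-> exists k, proj1_sig (pi k w) x.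

From Stdlib Require Import List Arith Lia Classical FunctionalExtensionality
  PropExtensionality ClassicalEpsilon Cantor.

(* The hypothesis Delta in S (x) S yields a countable family (B_i) of measurable
   sets separating the points of S.  Finite boolean patterns over (B_i) ("cells")
   form a countable family of measurable sets, and:
   - a set-valued map M is "hit-measurable" when {w | M(w) meets C} is measurable
     for each measurable C; cr-sets are hit-measurable, and hit-measurability is
     preserved by countable unions and, for finite sets, by passing to the new
     part pi_n \ U_(k<n) pi_k (a cell isolates a point from finitely many others);
   - |A cap M(w)| >= m iff M(w) meets A in m pairwise disjoint cells, so for a
     hit-measurable M these counting events are measurable, which makes M a
     cr-set. *)

Section SigmaClosure.
Context {T : Type} (F : (T -> Prop) -> Prop) (hF : sigma_algebra F).

Lemma meas_ext (P Q : T -> Prop) : F P -> (forall w, P w <-> Q w) -> F Q.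
Proof.
  intros HP HPQ. replace Q with P; [exact HP|].
  apply functional_extensionality; intro w; apply propositional_extensionality; auto.
Qed.

Lemma meas_compl (P : T -> Prop) : F P -> F (fun w => ~ P w).
Proof. apply hF. Qed.

Lemma meas_exists_nat (E : nat -> T -> Prop) :
  (forall n, F (E n)) -> F (fun w => exists n, E n w).
Proof. apply hF. Qed.

Lemma meas_const (P : Prop) : F (fun _ => P).
Proof.
  destruct hF as [HT [HC _]].
  destruct (classic P) as [HP|HP].
  - apply (meas_ext _ _ HT). tauto.
  - apply (meas_ext _ _ (HC _ HT)). tauto.
Qed.

Lemma meas_or (P Q : T -> Prop) : F P -> F Q -> F (fun w => P w \/ Q w).
Proof.
  intros HP HQ.
  apply (meas_ext (fun w => exists n, match n with 0 => P w | _ => Q w end)).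
  - apply meas_exists_nat; intros [|n]; assumption.
  - intro w; split.
    + intros [[|n] H]; auto.
    + intros [H|H]; [exists 0 | exists 1]; exact H.
Qed.

Lemma meas_and (P Q : T -> Prop) : F P -> F Q -> F (fun w => P w /\ Q w).
Proof.
  intros HP HQ. apply (meas_ext (fun w => ~ (~ P w \/ ~ Q w))).
  - apply meas_compl, meas_or; apply meas_compl; assumption.
  - intro w; tauto.
Qed.

Lemma meas_impl (P Q : T -> Prop) : F P -> F Q -> F (fun w => P w -> Q w).
Proof.
  intros HP HQ. apply (meas_ext (fun w => ~ P w \/ Q w)).
  - apply meas_or; [apply meas_compl|]; assumption.
  - intro w; tauto.
Qed.

Lemma meas_forall_nat (E : nat -> T -> Prop) :
  (forall n, F (E n)) -> F (fun w => forall n, E n w).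
Proof.
  intros HE. apply (meas_ext (fun w => ~ exists n, ~ E n w)).
  - apply meas_compl, meas_exists_nat; intro n; apply meas_compl, HE.
  - intro w; split.
    + intros H n; apply NNPP; intro Hn; apply H; eauto.
    + intros H [n Hn]; auto.
Qed.

Lemma meas_forall_in_list {X : Type} (E : X -> T -> Prop) (l : list X) :
  (forall x, F (E x)) -> F (fun w => forall x, In x l -> E x w).
Proof.
  intros HE. induction l as [|a l IH].
  - apply (meas_ext (fun _ => True)); [apply meas_const | simpl; tauto].
  - apply (meas_ext (fun w => E a w /\ forall x, In x l -> E x w)).
    + apply meas_and; auto.
    + intro w; simpl; split.
      * intros [Ha Hl] x [<-|Hx]; auto.
      * intros H; auto.
Qed.

Definition exists_closed (X : Type) : Prop :=
  forall E : X -> T -> Prop, (forall x, F (E x)) -> F (fun w => exists x, E x w).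

Lemma exists_closed_nat : exists_closed nat.
Proof. exact meas_exists_nat. Qed.

Lemma exists_closed_bool : exists_closed bool.
Proof.
  intros E HE. apply (meas_ext (fun w => E true w \/ E false w)).
  - apply meas_or; apply HE.
  - intro w; split.
    + intros [H|H]; eauto.
    + intros [[|] H]; auto.
Qed.

Lemma exists_closed_prod (X Y : Type) :
  exists_closed X -> exists_closed Y -> exists_closed (X * Y).
Proof.
  intros HX HY E HE. apply (meas_ext (fun w => exists x y, E (x, y) w)).
  - apply HX; intro x; apply HY; intro y; apply HE.
  - intro w; split.
    + intros [x [y H]]; eauto.
    + intros [[x y] H]; eauto.
Qed.

Lemma exists_closed_list (X : Type) : exists_closed X -> exists_closed (list X).
Proof.
  intros HX.
  assert (Hlen : forall n (E : list X -> T -> Prop), (forall l, F (E l)) ->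
            F (fun w => exists l, length l = n /\ E l w)).
  { induction n as [|n IH]; intros E HE.
    - apply (meas_ext (E nil)); [apply HE|]. intro w; split.
      + intros H; exists nil; auto.
      + intros [[|a l] [Hl H]]; [exact H | discriminate].
    - apply (meas_ext (fun w => exists x l, length l = n /\ E (x :: l) w)).
      + apply HX; intro x; apply IH; intro l; apply HE.
      + intro w; split.
        * intros [x [l [Hl H]]]; exists (x :: l); simpl; auto.
        * intros [[|a l] [Hl H]]; [discriminate|]. exists a, l; auto. }
  intros E HE. apply (meas_ext (fun w => exists n l, length l = n /\ E l w)).
  - apply meas_exists_nat; intro n; apply Hlen, HE.
  - intro w; split.
    + intros [n [l [_ H]]]; eauto.
    + intros [l H]; exists (length l), l; auto.
Qed.

End SigmaClosure.

(* [at_least P m]: the predicate [P] has at least [m] distinct elements.  The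
   cardinality events generating [crsigma] are boolean combinations of these. *)
Definition at_least {X : Type} (P : X -> Prop) (m : nat) : Prop :=
  exists xs, NoDup xs /\ length xs = m /\ forall x, In x xs -> P x.

Lemma at_least_le {X : Type} (P : X -> Prop) n k : at_least P n -> k <= n -> at_least P k.
Proof.
  intros [xs [Hnd [Hlen Hin]]] Hk.
  exists (firstn k xs); split; [|split].
  - apply (NoDup_app_remove_r _ (skipn k xs)); rewrite firstn_skipn; assumption.
  - rewrite length_firstn; lia.
  - intros x Hx; apply Hin. rewrite <- (firstn_skipn k xs); apply in_or_app; auto.
Qed.

Lemma restrict_to_list {X : Type} (P : X -> Prop) (L : list X) :
  exists l, NoDup l /\ forall x, P x /\ In x L <-> In x l.
Proof.
  induction L as [|a L [l [Hnd Hl]]].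
  - exists nil; split; [constructor | simpl; tauto].
  - destruct (classic (P a /\ ~ In a l)) as [[Ha Hn]|Hc].
    + exists (a :: l); split; [constructor; assumption|].
      intro x; simpl; rewrite <- Hl. split.
      * intros [Hx [->|HxL]]; auto.
      * intros [<-|[Hx HxL]]; auto.
    + exists l; split; [assumption|]. intro x; simpl; split.
      * intros [Hx [<-|HxL]]; [|apply Hl; auto].
        apply NNPP; intro Hn; apply Hc; auto.
      * intros Hx; apply Hl in Hx; tauto.
Qed.

Lemma infinite_at_least {X : Type} (P : X -> Prop) : ~ finite_set P -> forall n, at_least P n.
Proof.
  intros Hinf n. induction n as [|n [xs [Hnd [Hlen Hin]]]].
  - exists nil; simpl; repeat split; [constructor | tauto].
  - destruct (classic (exists x, P x /\ ~ In x xs)) as [[x [Hx Hn]]|Hc].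
    + exists (x :: xs); simpl; repeat split; [constructor; assumption | lia |].
      intros y [<-|Hy]; auto.
    + exfalso; apply Hinf. exists xs; intros x Hx.
      apply NNPP; intro; apply Hc; eauto.
Qed.

Lemma card_Some_iff {X : Type} (P : X -> Prop) m :
  card_is P (Some m) <-> at_least P m /\ ~ at_least P (S m).
Proof.
  simpl. split.
  - intros [l [Hnd [Hlen Hl]]]. split.
    + exists l; repeat split; auto. intros x Hx; apply Hl, Hx.
    + intros [xs [Hnd' [Hlen' Hin]]].
      assert (length xs <= length l) by (apply NoDup_incl_length; auto; intros x Hx; apply Hl; auto).
      lia.
  - intros [Hm Hnm]. destruct (classic (finite_set P)) as [[L HL]|Hinf].
    + destruct (restrict_to_list P L) as [l [Hnd Hl]].
      assert (HP : forall x, P x <-> In x l) by (intro x; rewrite <- Hl; intuition).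
      destruct Hm as [xs [Hnd' [Hlen' Hin]]].
      assert (length xs <= length l) by (apply NoDup_incl_length; auto; intros x Hx; apply HP; auto).
      assert (length l <= m).
      { destruct (le_lt_dec (length l) m) as [Hle|Hlt]; [exact Hle|].
        exfalso; apply Hnm, (at_least_le P (length l)); [|lia].
        exists l; repeat split; auto; intro x; apply HP. }
      exists l; repeat split; auto; [lia | apply HP | apply HP].
    + exfalso; apply Hnm, infinite_at_least, Hinf.
Qed.

Lemma card_None_iff {X : Type} (P : X -> Prop) : card_is P None <-> forall n, at_least P n.
Proof.
  simpl. split; [apply infinite_at_least|].
  intros H [L HL]. destruct (H (S (length L))) as [xs [Hnd [Hlen Hin]]].
  assert (length xs <= length L) by (apply NoDup_incl_length; auto; intros x Hx; auto).
  lia.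
Qed.

Lemma crset_of_at_least {Omega St : Type} (FF : (Omega -> Prop) -> Prop)
  (SS : (St -> Prop) -> Prop) (hF : sigma_algebra FF) (tau : Omega -> CS St) :
  (forall A m, SS A -> FF (fun w => at_least (fun x => A x /\ proj1_sig (tau w) x) m)) ->
  crset FF SS tau.
Proof.
  intros Hat E HE. apply HE.
  - (* The events whose preimage is measurable form a sigma-algebra. *)
    destruct hF as [HT [HC HU]]. split; [|split].
    + exact HT.
    + intros A HA; exact (HC _ HA).
    + intros A HA; exact (HU (fun n w => A n (tau w)) HA).
  - intros G [A [k [HA HG]]].
    apply (meas_ext FF (fun w => card_is (fun x => A x /\ proj1_sig (tau w) x) k));
      [|intro w; rewrite HG; tauto].
    destruct k as [m|].
    + apply (meas_ext FF (fun w => at_least (fun x => A x /\ proj1_sig (tau w) x) m /\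
                                   ~ at_least (fun x => A x /\ proj1_sig (tau w) x) (S m))).
      * apply meas_and, meas_compl; auto.
      * intro w; rewrite card_Some_iff; tauto.
    + apply (meas_ext FF (fun w => forall n, at_least (fun x => A x /\ proj1_sig (tau w) x) n)).
      * apply meas_forall_nat; auto.
      * intro w; rewrite card_None_iff; tauto.
Qed.

Definition rectangles {T U : Type} (a : nat -> T -> Prop) (b : nat -> U -> Prop)
  : (T * U -> Prop) -> Prop :=
  fun R => exists i, forall p, R p <-> (a i (fst p) /\ b i (snd p)).

Lemma generated_sigma_algebra {T : Type} (G : (T -> Prop) -> Prop) :
  sigma_algebra (generated G).
Proof.
  split; [|split].
  - intros F HF _; apply HF.
  - intros A HA F HF HG; apply HF, HA; assumption.
  - intros A HA F HF HG; apply HF; intro n; apply HA; assumption.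
Qed.

Lemma generated_mono {T : Type} (G G' : (T -> Prop) -> Prop) (A : T -> Prop) :
  (forall B, G B -> G' B) -> generated G A -> generated G' A.
Proof. intros HGG' HA F HF HG; apply HA; auto. Qed.

Definition countably_generated {T U : Type} (S1 : (T -> Prop) -> Prop)
  (S2 : (U -> Prop) -> Prop) (R : T * U -> Prop) : Prop :=
  exists a b, (forall i, S1 (a i)) /\ (forall i, S2 (b i)) /\ generated (rectangles a b) R.

(* Countably generated sets form a sigma-algebra, since countably many countable
   families of rectangles merge into one. *)
Lemma countably_generated_sigma_algebra {T U : Type} (S1 : (T -> Prop) -> Prop)
  (S2 : (U -> Prop) -> Prop) (h1 : sigma_algebra S1) (h2 : sigma_algebra S2) :
  sigma_algebra (countably_generated S1 S2).
Proof.
  split; [|split].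
  - exists (fun _ _ => True), (fun _ _ => True).
    split; [intros; apply h1 | split; [intros; apply h2 | apply generated_sigma_algebra]].
  - intros A [a [b [Ha [Hb HA]]]].
    exists a, b; repeat split; auto. apply generated_sigma_algebra, HA.
  -
    intros A HA. destruct (choice _ HA) as [an Han].
    destruct (choice _ Han) as [bn Habn].
    set (a := fun k => an (fst (Cantor.of_nat k)) (snd (Cantor.of_nat k))).
    set (b := fun k => bn (fst (Cantor.of_nat k)) (snd (Cantor.of_nat k))).
    exists a, b; split; [|split].
    + intro k; apply (Habn _).
    + intro k; apply (Habn _).
    + apply generated_sigma_algebra; intro n.
      destruct (Habn n) as [_ [_ Hgen]]. revert Hgen; apply generated_mono.
      intros R [i Hi]. exists (Cantor.to_nat (n, i)).
      unfold a, b; rewrite Cantor.cancel_of_to; exact Hi.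
Qed.

Lemma product_sigma_countably_generated {T U : Type} (S1 : (T -> Prop) -> Prop)
  (S2 : (U -> Prop) -> Prop) (h1 : sigma_algebra S1) (h2 : sigma_algebra S2)
  (R : T * U -> Prop) :
  product_sigma S1 S2 R -> countably_generated S1 S2 R.
Proof.
  intros HR. apply HR; [apply countably_generated_sigma_algebra; assumption|].
  intros Q [A [B [HA [HB HQ]]]].
  exists (fun _ => A), (fun _ => B); repeat split; auto.
  intros F HF HG; apply HG; exists 0; exact HQ.
Qed.

Lemma diagonal_separating {St : Type} (SS : (St -> Prop) -> Prop) (hS : sigma_algebra SS) :
  product_sigma SS SS (diagonal St) ->
  exists B : nat -> St -> Prop, (forall i, SS (B i)) /\
    forall x y, x <> y -> exists i, ~ (B i x <-> B i y).
Proof.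
  intros HD. destruct (product_sigma_countably_generated SS SS hS hS _ HD)
    as [a [b [_ [Hb Hgen]]]].
  exists b; split; [exact Hb|]. intros x y Hxy. apply NNPP; intro Hn.
  assert (Hb_xy : forall i, b i x <-> b i y).
  { intro i; apply NNPP; intro; apply Hn; eauto. }
  (* No set generated by the rectangles distinguishes (x, x) from (x, y). *)
  assert (Hsame : (fun R : St * St -> Prop => R (x, x) <-> R (x, y)) (diagonal St)).
  { apply Hgen.
    - split; [|split]; simpl.
      + tauto.
      + intros A HA; tauto.
      + intros A HA; split; intros [n Hn']; exists n; apply HA; assumption.
    - intros R [i Hi]; simpl. rewrite !Hi; simpl. rewrite (Hb_xy i); tauto. }
  apply Hxy, Hsame; reflexivity.
Qed.

Section Cells.
Context {St : Type} (B : nat -> St -> Prop).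

Definition cell (c : list (nat * bool)) (x : St) : Prop :=
  forall p, In p c -> (B (fst p) x <-> snd p = true).

Lemma cell_measurable (SS : (St -> Prop) -> Prop) (hS : sigma_algebra SS) :
  (forall i, SS (B i)) -> forall c, SS (cell c).
Proof.
  intros HB c. apply (meas_forall_in_list SS hS (fun p x => B (fst p) x <-> snd p = true)).
  intros [i [|]]; simpl.
  - apply (meas_ext SS (B i)); [apply HB | intuition].
  - apply (meas_ext SS (fun x => ~ B i x)); [apply meas_compl; auto | intuition discriminate].
Qed.

Definition disjoint_cells (c c' : list (nat * bool)) : Prop :=
  exists i b, In (i, b) c /\ In (i, negb b) c'.

Lemma disjoint_cells_empty c c' x : disjoint_cells c c' -> cell c x -> cell c' x -> False.
Proof.
  intros [i [b [Hc Hc']]] Hx Hx'.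
  specialize (Hx _ Hc); specialize (Hx' _ Hc'); simpl in *.
  destruct b; simpl in *; intuition discriminate.
Qed.

Definition pattern (I : list nat) (x : St) : list (nat * bool) :=
  map (fun i => (i, if excluded_middle_informative (B i x) then true else false)) I.

Lemma pattern_cell I x : cell (pattern I x) x.
Proof.
  intros p Hp. apply in_map_iff in Hp as [i [<- _]]; simpl.
  destruct (excluded_middle_informative (B i x)); intuition discriminate.
Qed.

Lemma pattern_disjoint I x y i :
  In i I -> ~ (B i x <-> B i y) -> disjoint_cells (pattern I x) (pattern I y).
Proof.
  intros HI Hsep. unfold pattern.
  destruct (excluded_middle_informative (B i x)) as [Hx|Hx];
    [exists i, true | exists i, false]; split;
    try (apply in_map_iff; exists i; split; [|exact HI]);
    destruct (excluded_middle_informative (B i x)); try contradiction;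
    destruct (excluded_middle_informative (B i y)); tauto.
Qed.

Lemma pattern_cells_disjoint (I : list nat) (xs : list St) :
  NoDup xs ->
  (forall x y, In x xs -> In y xs -> x <> y -> exists i, In i I /\ ~ (B i x <-> B i y)) ->
  ForallOrdPairs disjoint_cells (map (pattern I) xs).
Proof.
  induction 1 as [|y ys Hy Hys IH]; intros HI; simpl; constructor.
  - apply Forall_forall; intros c Hc. apply in_map_iff in Hc as [z [<- Hz]].
    assert (Hyz : y <> z) by (intros ->; contradiction).
    destruct (HI y z (or_introl eq_refl) (or_intror Hz) Hyz) as [i [Hi Hsep]].
    exact (pattern_disjoint I y z i Hi Hsep).
  - apply IH; intros x z Hx Hz; apply HI; simpl; auto.
Qed.

Hypothesis sep : forall x y, x <> y -> exists i, ~ (B i x <-> B i y).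

Lemma separating_indices (L : list St) :
  exists I, forall x y, In x L -> In y L -> x <> y -> exists i, In i I /\ ~ (B i x <-> B i y).
Proof.
  assert (Hidx : forall p : St * St, exists i, fst p <> snd p -> ~ (B i (fst p) <-> B i (snd p))).
  { intros [x y]. destruct (classic (x = y)) as [<-|Hxy].
    - exists 0; simpl; tauto.
    - destruct (sep x y Hxy) as [i Hi]; exists i; auto. }
  destruct (choice _ Hidx) as [idx Hidx'].
  exists (map idx (list_prod L L)). intros x y Hx Hy Hxy.
  exists (idx (x, y)); split.
  - apply in_map, in_prod; assumption.
  - apply (Hidx' (x, y)), Hxy.
Qed.

Lemma isolating_cell (Q : St -> Prop) (x : St) :
  finite_set Q -> ~ Q x -> exists c, cell c x /\ forall y, Q y -> ~ cell c y.
Proof.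
  intros [W HW] Hx. destruct (separating_indices (x :: W)) as [I HI].
  exists (pattern I x); split; [apply pattern_cell|].
  intros y Hy Hcy. assert (Hxy : x <> y) by (intros ->; contradiction).
  destruct (HI x y (or_introl eq_refl) (or_intror (HW y Hy)) Hxy) as [i [Hi Hsep]].
  exact (disjoint_cells_empty _ _ y (pattern_disjoint I x y i Hi Hsep) Hcy (pattern_cell I y)).
Qed.

Lemma points_of_disjoint_cells (P : St -> Prop) (cs : list (list (nat * bool))) :
  ForallOrdPairs disjoint_cells cs -> (forall c, In c cs -> exists x, cell c x /\ P x) ->
  exists xs, NoDup xs /\ length xs = length cs /\
    forall x, In x xs -> P x /\ exists c, In c cs /\ cell c x.
Proof.
  induction 1 as [|c cs Hc Hcs IH]; intros Hmeet.
  - exists nil; simpl; split; [constructor | split; [reflexivity | tauto]].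
  - destruct IH as [xs [Hnd [Hlen Hxs]]]; [intros; apply Hmeet; simpl; auto|].
    destruct (Hmeet c (or_introl eq_refl)) as [x [Hx HPx]].
    exists (x :: xs); simpl; split; [|split; [congruence|]].
    + constructor; [|exact Hnd]. intros Hin.
      destruct (Hxs x Hin) as [_ [c' [Hc' Hxc']]].
      rewrite Forall_forall in Hc.
      exact (disjoint_cells_empty c c' x (Hc c' Hc') Hx Hxc').
    + intros y [<-|Hy]; [split; eauto|].
      destruct (Hxs y Hy) as [HPy [c' [Hc' Hyc']]]; eauto.
Qed.

Lemma at_least_iff_cells (P : St -> Prop) (m : nat) :
  at_least P m <-> exists cs, length cs = m /\ ForallOrdPairs disjoint_cells cs /\
                              forall c, In c cs -> exists x, cell c x /\ P x.
Proof.
  split.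
  - intros [xs [Hnd [Hlen HP]]].
    destruct (separating_indices xs) as [I HI].
    exists (map (pattern I) xs); split; [rewrite length_map; exact Hlen|split].
    + apply pattern_cells_disjoint; assumption.
    + intros c Hc. apply in_map_iff in Hc as [x [<- Hx]].
      exists x; split; [apply pattern_cell | apply HP, Hx].
  - intros [cs [Hlen [Hdisj Hmeet]]].
    destruct (points_of_disjoint_cells P cs Hdisj Hmeet) as [xs [Hnd [Hlen' Hxs]]].
    exists xs; repeat split; [exact Hnd | congruence | apply Hxs].
Qed.

End Cells.

Lemma finite_union_below {X : Type} (P : nat -> X -> Prop) :
  (forall k, finite_set (P k)) -> forall n, finite_set (fun y => exists k, k < n /\ P k y).
Proof.
  intros Hfin n. induction n as [|n [W HW]].
  - exists nil; intros y [k [Hk _]]; lia.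
  - destruct (Hfin n) as [L HL]. exists (L ++ W). intros y [k [Hk Hy]].
    apply in_or_app. destruct (Nat.eq_dec k n) as [->|Hkn]; [left; auto|].
    right; apply HW; exists k; split; [lia | exact Hy].
Qed.

Definition new_part {X : Type} (P : nat -> X -> Prop) (n : nat) (x : X) : Prop :=
  P n x /\ forall k, k < n -> ~ P k x.

Lemma new_part_disjoint {X : Type} (P : nat -> X -> Prop) n m x :
  n <> m -> ~ (new_part P n x /\ new_part P m x).
Proof.
  intros Hnm [[Hn Hn_new] [Hm Hm_new]].
  destruct (Nat.lt_gt_cases n m) as [[Hlt|Hgt] _]; [exact Hnm| |].
  - exact (Hm_new n Hlt Hn).
  - exact (Hn_new m Hgt Hm).
Qed.

Lemma new_part_union {X : Type} (P : nat -> X -> Prop) x :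
  (exists k, P k x) <-> exists n, new_part P n x.
Proof.
  split; [|intros [n [Hn _]]; eauto].
  intros Hex. destruct (dec_inh_nat_subset_has_unique_least_element (fun k => P k x)
                          (fun k => classic (P k x)) Hex) as [n [[Hn Hleast] _]].
  exists n; split; [exact Hn|]. intros k Hk HPk. specialize (Hleast k HPk); lia.
Qed.

Section HitMeasurable.
Context {Omega St : Type} (FF : (Omega -> Prop) -> Prop) (SS : (St -> Prop) -> Prop)
  (hF : sigma_algebra FF) (hS : sigma_algebra SS).

Definition hit_measurable (M : Omega -> St -> Prop) : Prop :=
  forall C, SS C -> FF (fun w => exists x, C x /\ M w x).

(* A cr-set is hit-measurable: "tau(w) meets C" is the complement of |C cap tau(w)| = 0. *)
Lemma crset_hit_measurable (tau : Omega -> CS St) :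
  crset FF SS tau -> hit_measurable (fun w => proj1_sig (tau w)).
Proof.
  intros Htau C HC.
  assert (Hempty : FF (fun w => card_is (fun x => C x /\ proj1_sig (tau w) x) (Some 0))).
  { apply (Htau (fun M => card_is (fun x => C x /\ proj1_sig M x) (Some 0))).
    intros G HG Hgen; apply Hgen; exists C, (Some 0); split; [exact HC | tauto]. }
  apply (meas_ext FF _ _ (meas_compl FF hF _ Hempty)). intro w; simpl; split.
  - intros Hne. apply NNPP; intro Hno; apply Hne.
    exists nil; split; [constructor | split; [reflexivity|]].
    intro x; simpl; split; [intros Hx; apply Hno; exists x; exact Hx | tauto].
  - intros [x Hx] [[|y l] [_ [Hlen Hl]]]; [|discriminate].
    apply (Hl x), Hx.
Qed.

Lemma hit_measurable_union (M : nat -> Omega -> St -> Prop) :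
  (forall k, hit_measurable (M k)) -> hit_measurable (fun w x => exists k, M k w x).
Proof.
  intros HM C HC. apply (meas_ext FF (fun w => exists k x, C x /\ M k w x)).
  - apply meas_exists_nat; [exact hF|]. intro k; apply HM, HC.
  - intro w; split.
    + intros [k [x [Hx HMx]]]; eauto.
    + intros [x [Hx [k HMx]]]; eauto.
Qed.

Context (B : nat -> St -> Prop) (hB : forall i, SS (B i))
  (sep : forall x y, x <> y -> exists i, ~ (B i x <-> B i y)).

Lemma exists_closed_cells : exists_closed FF (list (nat * bool)).
Proof.
  exact (exists_closed_list FF hF _
           (exists_closed_prod FF _ _ (exists_closed_nat FF hF) (exists_closed_bool FF hF))).
Qed.

(* The new part M_n \ U_(k<n) M_k of finite hit-measurable maps is hit-measurable:
   a point of it is isolated by a cell from the finitely many points of the M_k. *)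
Lemma hit_measurable_new_part (M : nat -> Omega -> St -> Prop) (n : nat) :
  (forall k, hit_measurable (M k)) -> (forall k w, finite_set (M k w)) ->
  hit_measurable (fun w => new_part (fun k => M k w) n).
Proof.
  intros HM Hfin C HC.
  apply (meas_ext FF (fun w => exists c, (exists x, (C x /\ cell B c x) /\ M n w x) /\
                               forall k, k < n -> ~ exists x, cell B c x /\ M k w x)).
  - apply exists_closed_cells; intro c. apply meas_and; [exact hF| |].
    + apply HM, meas_and; [exact hS | exact HC | apply cell_measurable; assumption].
    + apply meas_forall_nat; [exact hF|]; intro k.
      apply meas_impl; [exact hF | apply meas_const, hF|].
      apply meas_compl; [exact hF|]. apply HM, cell_measurable; assumption.
  - intro w; split.
    + intros [c [[x [[Hx Hcx] HMx]] Hc]]. exists x; split; [exact Hx | split; [exact HMx|]].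
      intros k Hk HMkx; apply (Hc k Hk); eauto.
    + intros [x [Hx [HMx Hnew]]].
      destruct (isolating_cell B sep (fun y => exists k, k < n /\ M k w y) x)
        as [c [Hcx Hcy]].
      * apply finite_union_below; intro k; apply Hfin.
      * intros [k [Hk HMkx]]; exact (Hnew k Hk HMkx).
      * exists c; split; [eauto|]. intros k Hk [y [Hy HMky]].
        exact (Hcy y (ex_intro _ k (conj Hk HMky)) Hy).
Qed.

(* For a hit-measurable map the counting events "at least m points in A" are
   measurable, by counting pairwise disjoint cells that meet A. *)
Lemma at_least_measurable (M : Omega -> St -> Prop) (A : St -> Prop) (m : nat) :
  hit_measurable M -> SS A -> FF (fun w => at_least (fun x => A x /\ M w x) m).
Proof.
  intros HM HA.
  apply (meas_ext FF (fun w => exists cs, length cs = m /\ ForallOrdPairs disjoint_cells cs /\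
                                  forall c, In c cs -> exists x, (cell B c x /\ A x) /\ M w x)).
  - apply exists_closed_list; [exact hF | exact exists_closed_cells|]. intro cs.
    apply meas_and; [exact hF | apply meas_const, hF|].
    apply meas_and; [exact hF | apply meas_const, hF|].
    apply meas_forall_in_list; [exact hF|]; intro c.
    apply HM, meas_and; [exact hS | apply cell_measurable | exact HA]; assumption.
  - intro w. rewrite (at_least_iff_cells B sep). split.
    + intros [cs [Hlen [Hdisj Hmeet]]]; exists cs; repeat split; auto.
      intros c Hc; destruct (Hmeet c Hc) as [x Hx]; exists x; tauto.
    + intros [cs [Hlen [Hdisj Hmeet]]]; exists cs; repeat split; auto.
      intros c Hc; destruct (Hmeet c Hc) as [x Hx]; exists x; tauto.
Qed.

Lemma crset_of_hit_measurable (tau : Omega -> CS St) (M : Omega -> St -> Prop) :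
  hit_measurable M -> (forall w x, proj1_sig (tau w) x <-> M w x) -> crset FF SS tau.
Proof.
  intros HM Htau. apply crset_of_at_least; [exact hF|]. intros A m HA.
  apply (meas_ext FF _ _ (at_least_measurable M A m HM HA)).
  intro w; unfold at_least.
  split; intros [xs [Hnd [Hlen Hxs]]]; exists xs; (split; [exact Hnd|]);
    (split; [exact Hlen|]); intros y Hy; destruct (Hxs y Hy) as [HAy HMy];
    (split; [exact HAy | apply Htau, HMy]).
Qed.

End HitMeasurable.

Definition restrict {St : Type} (M : CS St) (Q : St -> Prop) : CS St :=
  exist _ (fun x => proj1_sig M x /\ Q x)
    (let (f, Hf) := proj2_sig M in
     ex_intro _ f (fun x y Hx Hy => Hf x y (proj1 Hx) (proj1 Hy))).

Theorem proposition6p2 (Omega S : Type)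
  (FF : (Omega -> Prop) -> Prop) (SS : (S -> Prop) -> Prop)
  (hF : sigma_algebra FF) (hS : sigma_algebra SS)
  (hDelta : product_sigma SS SS (diagonal S))
  (tau : Omega -> CS S) (htau : constructive FF SS tau) :
  (exists rho : nat -> Omega -> CS S,
     (forall n, finite_crset FF SS (rho n)) /\
     (forall w n m, n <> m -> forall x, ~ (proj1_sig (rho n w) x /\ proj1_sig (rho m w) x)) /\
     (forall w x, proj1_sig (tau w) x <-> exists n, proj1_sig (rho n w) x)) /\
  crset FF SS tau.
Proof.
  destruct (diagonal_separating SS hS hDelta) as [B [hB sep]].
  destruct htau as [pi [hpi hcover]].
  set (P := fun k w => proj1_sig (pi k w)).
  assert (hP : forall k, hit_measurable FF SS (P k))
    by (intro k; apply crset_hit_measurable; [exact hF | apply hpi]).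
  assert (hfin : forall k w, finite_set (P k w)) by (intros k w; apply hpi).
  split.
  -
    exists (fun n w => restrict (pi n w) (fun x => forall k, k < n -> ~ P k w x)).
    split; [|split].
    + intro n; split.
      * apply (crset_of_hit_measurable FF SS hF hS B hB sep _ _
                 (hit_measurable_new_part FF SS hF hS B hB sep P n hP hfin)).
        intros w x; reflexivity.
      * intro w; destruct (hfin n w) as [L HL]; exists L; intros x [Hx _]; exact (HL x Hx).
    + intros w n m Hnm x; exact (new_part_disjoint (fun k => P k w) n m x Hnm).
    + intros w x; rewrite hcover; exact (new_part_union (fun k => P k w) x).
  - exact (crset_of_hit_measurable FF SS hF hS B hB sep _ _
             (hit_measurable_union FF SS hF P hP) hcover).
Qed.
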